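(* For every $r\ge 1$ and $k\ge 1$ there exists $n_0=n_0(r,k)$ such that for every $n>n_0$ the following holds. Let $[n]^r$ denote the complete $r$-partite $r$-uniform hypergraph with $r$ disjoint sides $V_1,\ldots,V_r$, each of size $n$, whose edges are all $r$-sets meeting each $V_j$ in exactly one vertex. If $F_1,\ldots,F_k\subseteq [n]^r$ satisfy $|F_i|>(k-1)n^{r-1}$ for all $i\le k$, then there exist pairwise disjoint edges $e_1,\ldots,e_k$ with $e_i\in F_i$ for every $i$ (a rainbow matching).
   Context: A rainbow matching for a collection $(F_1,\ldots,F_k)$ of hypergraphs is a choice of pairwise disjoint edges $e_i\in F_i$, one from each $F_i$. *)

From mathcomp Require Import all_boot.
Set Implicit Arguments. Unset Strict Implicit. Unset Printing Implicit Defensive.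

(* Vertex set: 'I_r * 'I_n, the pair (j, v) being vertex v of side V_j.
   An edge meets each side in exactly one vertex, so it is determined by
   a function f : 'I_r -> 'I_n; its vertex set is {(j, f j) | j}. *)
Definition rpart_edge (r n : nat) := {ffun 'I_r -> 'I_n}.

Definition edge_vertices (r n : nat) (e : rpart_edge r n) : {set 'I_r * 'I_n} :=
  [set (j, e j) | j : 'I_r].

Definition disjoint_edges (r n : nat) (e f : rpart_edge r n) : bool :=
  [disjoint edge_vertices e & edge_vertices f].

Definition rainbow_matching (r n k : nat) (F : 'I_k -> {set rpart_edge r n})
    (e : 'I_k -> rpart_edge r n) : Prop :=
  (forall i, e i \in F i) /\
  (forall i j, i != j -> disjoint_edges (e i) (e j)).

From mathcomp Require Import all_boot zify.
Set Implicit Arguments. Unset Strict Implicit. Unset Printing Implicit Defensive.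

(* Induction on k. In [n]^r a vertex lies in D = n^(r-1) edges and two vertices
   of different sides in G = n^(r-2) edges; n > r^2 k gives r^2 (k-1) G <= D.
   If some F_p has more than r k G edges through a vertex x, delete the edges
   through x from the other families and match those by induction: the matched
   edges avoid x, so each of them meets at most r G edges through x, and some
   edge of F_p through x meets none of them. Otherwise every vertex has degree
   at most r k G in every family, so an arbitrary edge g of F_0 meets at most
   r^2 k G <= D edges of each other family; delete those and recurse. Either
   way every other family loses at most D edges, which the induction affords. *)

Lemma leq_card_bigcup (I T : finType) (P : pred I) (A : I -> {set T}) :
  #|\bigcup_(i | P i) A i| <= \sum_(i | P i) #|A i|.
Proof.
elim/big_rec2: _ => [|i B s _ IH]; first by rewrite cards0.
by rewrite (leq_trans (leq_card_setU _ _)) // leq_add2l.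
Qed.

Section Stars.
Variables r n : nat.
Implicit Types (e f g : rpart_edge r n) (A : {set rpart_edge r n}).

Definition star (j : 'I_r) (v : 'I_n) : {set rpart_edge r n} :=
  [set f : rpart_edge r n | f j == v].

Definition meeting g : {set rpart_edge r n} :=
  [set f : rpart_edge r n | ~~ disjoint_edges g f].

Lemma disjoint_edgesP e f : reflect (forall j, e j != f j) (disjoint_edges e f).
Proof.
apply: (iffP pred0P) => [dis j | neq [j v] /=].
  apply/eqP => efj; have := dis (j, e j); rewrite /= /edge_vertices.
  by rewrite (imset_f (fun l => (l, e l))) // efj (imset_f (fun l => (l, f l))).
apply/negbTE/andP => -[/imsetP[l _ [-> ->]] /imsetP[l' _ [<- efl]]].
by move: (neq l); rewrite efl eqxx.
Qed.

Lemma disjoint_edges_sym e f : disjoint_edges e f = disjoint_edges f e.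
Proof. exact: disjoint_sym. Qed.

Lemma meetingE g : meeting g = \bigcup_(l : 'I_r) star l (g l).
Proof.
apply/setP => f; rewrite inE; apply/idP/bigcupP => [meet|[l _]].
  case: (pickP (fun l => g l == f l)) => [l glf|none].
    by exists l; rewrite // inE eq_sym.
  by move/negP: meet; case; apply/disjoint_edgesP => l; rewrite none.
by rewrite inE => /eqP flg; apply/negP => /disjoint_edgesP/(_ l); rewrite flg eqxx.
Qed.

Lemma card_bigcap_star (J : {set 'I_r}) (w : 'I_r -> 'I_n) :
  #|\bigcap_(j in J) star j (w j)| = n ^ #|~: J|.
Proof.
rewrite (@eq_card _ _ (family (fun j => if j \in J then pred1 (w j) else predT))).
  rewrite card_family foldrE big_map big_enum -prod_nat_const [RHS]big_mkcond /=.
  by apply: eq_bigr => j _; rewrite inE; case: (j \in J); rewrite ?card1 ?card_ord.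
move=> f; rewrite inE; apply/bigcapP/familyP => [fw j | fw j Jj].
  by case: ifPn => [/fw|_] //; rewrite inE.
by have := fw j; rewrite Jj !inE.
Qed.

Lemma card_star j v : #|star j v| = n ^ (r - 1).
Proof.
have -> : star j v = \bigcap_(x in [set j]) star x v by rewrite big_set1.
rewrite card_bigcap_star; congr (_ ^ _).
by rewrite cardsCs setCK cards1 card_ord.
Qed.

Lemma card_star2 j l v w : j != l -> #|star j v :&: star l w| = n ^ (r - 2).
Proof.
move=> jl; have := card_bigcap_star [set j; l] (fun x => if x == j then v else w).
rewrite big_setU1 ?inE // big_set1 eqxx eq_sym (negbTE jl) => ->; congr (_ ^ _).
by rewrite cardsCs setCK cards2 jl card_ord.
Qed.

Lemma card_meeting_le A g d :
  (forall j v, #|A :&: star j v| <= d) -> #|A :&: meeting g| <= r * d.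
Proof.
move=> deg_le; rewrite meetingE big_distrr /=.
apply: leq_trans (leq_card_bigcup _ _) _.
apply: (@leq_trans (\sum_(j < r) d)); first by apply: leq_sum => j _.
by rewrite sum_nat_const card_ord.
Qed.

Section Codegree.
Variable G : nat.
Hypothesis codeg_le : forall j l v w, j != l -> #|star j v :&: star l w| <= G.

Lemma card_star_meeting_le j v e : e j != v -> #|star j v :&: meeting e| <= r * G.
Proof.
move=> ejv; rewrite meetingE big_distrr /= (bigD1 j) //=.
have -> : star j v :&: star j (e j) = set0.
  by apply/setP => f; rewrite !inE; case: eqP => // ->; rewrite eq_sym (negbTE ejv).
rewrite set0U; apply: leq_trans (leq_card_bigcup _ _) _.
apply: (@leq_trans (\sum_(l | l != j) G)).
  by apply: leq_sum => l lj; rewrite codeg_le 1?eq_sym.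
by rewrite sum_nat_const leq_mul2r -[X in _ <= X]card_ord max_card orbT.
Qed.

End Codegree.
End Stars.

Lemma cardsD_gt (T : finType) (A B : {set T}) k D :
  0 < k -> k * D < #|A| -> #|A :&: B| <= D -> (k - 1) * D < #|A :\: B|.
Proof. by move=> k_gt0; rewrite cardsD mulnBl mul1n; nia. Qed.

Lemma rainbow_matching_subset r n k (F F' : 'I_k -> {set rpart_edge r n}) e :
  (forall i, F' i \subset F i) -> rainbow_matching F' e -> rainbow_matching F e.
Proof. by move=> sF'F [eF' e_disj]; split=> // i; apply: subsetP (eF' i). Qed.

Lemma rainbow_matching_lift r n k (F : 'I_k.+1 -> {set rpart_edge r n}) p g e' :
  g \in F p -> rainbow_matching (fun i => F (lift p i)) e' ->
  (forall i, disjoint_edges g (e' i)) -> exists e, rainbow_matching F e.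
Proof.
move=> gF [e'F e'_disj] g_disj.
exists (fun i => if unlift p i is Some i' then e' i' else g); split.
  by move=> i; case: unliftP => [i' ->|->].
move=> i j; case: unliftP => [i' ->|->]; case: unliftP => [j' ->|->] //.
- by move=> ij; apply: e'_disj; apply: contraNneq ij => ->.
- by rewrite disjoint_edges_sym.
- by rewrite eqxx.
Qed.

Section Greedy.
Variables r n D G : nat.
Hypothesis star_le : forall (j : 'I_r) (v : 'I_n), #|star j v| <= D.
Hypothesis codeg_le :
  forall (j l : 'I_r) (v w : 'I_n), j != l -> #|star j v :&: star l w| <= G.

Section Step.
Variable k : nat.
Hypothesis kD : r * (r * k * G) <= D.
Hypothesis IH : forall F : 'I_k -> {set rpart_edge r n},
  (forall i, (k - 1) * D < #|F i|) -> exists e, rainbow_matching F e.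
Variable F : 'I_k.+1 -> {set rpart_edge r n}.
Hypothesis F_large : forall i, k * D < #|F i|.

Let rainbow_matching_lift_setD (X : {set rpart_edge r n}) p :
  (forall i, #|F (lift p i) :&: X| <= D) ->
  exists e', rainbow_matching (fun i => F (lift p i) :\: X) e'.
Proof.
move=> X_small; apply: IH => i.
by apply: cardsD_gt (F_large _) (X_small i); apply: leq_ltn_trans (ltn_ord i).
Qed.

Lemma rainbow_step_high_degree p j v :
  r * k * G < #|F p :&: star j v| -> exists e, rainbow_matching F e.
Proof.
move=> high.
have [e' e'_match] : exists e', rainbow_matching (fun i => F (lift p i) :\: star j v) e'.
  apply: rainbow_matching_lift_setD => i.
  by apply: leq_trans (star_le j v); apply/subset_leq_card/subsetIr.
have e'_off i : e' i j != v by have := e'_match.1 i; rewrite !inE => /andP[].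
have blocked : #|star j v :&: \bigcup_(i < k) meeting (e' i)| <= k * (r * G).
  rewrite big_distrr /=; apply: leq_trans (leq_card_bigcup _ _) _.
  apply: (@leq_trans (\sum_(i < k) (r * G))); last by rewrite sum_nat_const card_ord.
  by apply: leq_sum => i _; apply: card_star_meeting_le.
have : 0 < #|(F p :&: star j v) :\: \bigcup_(i < k) meeting (e' i)|.
  rewrite cardsD subn_gt0 -setIA; apply: leq_ltn_trans (subset_leq_card (subsetIr _ _)) _.
  by apply: leq_ltn_trans blocked _; rewrite mulnCA mulnA.
case/card_gt0P => g /setDP[/setIP[gF _] g_free].
apply: (rainbow_matching_lift gF (rainbow_matching_subset _ e'_match)) => i.
  exact: subsetDl.
rewrite disjoint_edges_sym; apply: contraR g_free => meet.
by apply/bigcupP; exists i; rewrite // inE.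
Qed.

Lemma rainbow_step_low_degree :
  (forall p j v, #|F p :&: star j v| <= r * k * G) -> exists e, rainbow_matching F e.
Proof.
move=> low.
have [g gF] : exists g, g \in F ord0 by apply/card_gt0P; apply: leq_ltn_trans (F_large _).
have [e' e'_match] : exists e', rainbow_matching (fun i => F (lift ord0 i) :\: meeting g) e'.
  by apply: rainbow_matching_lift_setD => i; apply: leq_trans kD; apply: card_meeting_le.
apply: (rainbow_matching_lift gF (rainbow_matching_subset _ e'_match)) => i.
  exact: subsetDl.
by have := e'_match.1 i; rewrite !inE negbK => /andP[].
Qed.

End Step.

Lemma rainbow_matching_of_degree_bounds k :
  r * (r * (k - 1) * G) <= D -> forall F : 'I_k -> {set rpart_edge r n},
  (forall i, (k - 1) * D < #|F i|) -> exists e, rainbow_matching F e.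
Proof.
elim: k => [|k IH] kD F F_large.
  by exists (fun i : 'I_0 => match notF (ltn_ord i) with end); split=> -[].
rewrite subSS subn0 in kD F_large.
have kD' : r * (r * (k - 1) * G) <= D by apply: leq_trans kD; nia.
case: (pickP (fun x : 'I_k.+1 * 'I_r * 'I_n => r * k * G < #|F x.1.1 :&: star x.1.2 x.2|)).
  by move=> [[p j] v] /= high; apply: rainbow_step_high_degree high => //; exact: IH kD'.
move=> low; apply: rainbow_step_low_degree => //; first exact: IH kD'.
by move=> p j v; rewrite leqNgt (low (p, j, v)).
Qed.

End Greedy.

Theorem theorem9p1 (r k : nat) : 1 <= r -> 1 <= k ->
  exists n0 : nat, forall n : nat, n0 < n ->
    forall F : 'I_k -> {set rpart_edge r n},
      (forall i, (k - 1) * n ^ (r - 1) < #|F i|) ->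
      exists e : 'I_k -> rpart_edge r n, rainbow_matching F e.
Proof.
move=> r_gt0 _; exists (r * r * k) => n n_large F F_large.
have star_le (j : 'I_r) (v : 'I_n) : #|star j v| <= n ^ (r - 1) by rewrite card_star.
have [r_gt1 | r_le1] := ltnP 1 r.
  apply: (rainbow_matching_of_degree_bounds (G := n ^ (r - 2)) star_le) => //.
    by move=> j l v w jl; rewrite card_star2.
  have -> : r - 1 = (r - 2).+1 by lia.
  by rewrite expnS mulnA leq_mul2r; apply/orP; right; nia.
have r1 : r = 1 by lia.
apply: (rainbow_matching_of_degree_bounds (G := 0) star_le) => //; last by rewrite !muln0.
by subst r => j l v w; rewrite (ord1 j) (ord1 l) eqxx.
Qed.
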